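(* Fix the quantities $P(h)$, $P(h\mid h)$, $P(h\mid\ell)$ satisfying the standing assumptions, and fix a strictly proper scoring rule $PS$. Then there exists $n_0$, depending only on these data, with the following property. For every $n\ge n_0$ and every symmetric common prior on $\{\ell,h\}^n$ whose one- and two-agent marginals are given by these quantities, the truthful profile $\Sigma^*$ is a Bayesian $k_B$-strong equilibrium. Here $$k_B^h=\begin{cases}\left\lceil \dfrac{(n-1)\,\mathbb E_{s\sim P_\ell}[PS(s,P_\ell)-PS(s,P_h)]}{P(\ell\mid\ell)\,(PS(h,P_h)-PS(\ell,P_h))}\right\rceil & \text{if } PS(h,P_h)>PS(\ell,P_h),\\ n&\text{otherwise,}\end{cases}$$ $$k_B^\ell=\begin{cases}\left\lceil \dfrac{(n-1)\,\mathbb E_{s\sim P_h}[PS(s,P_h)-PS(s,P_\ell)]}{P(h\mid h)\,(PS(\ell,P_\ell)-PS(h,P_\ell))}\right\rceil & \text{if } PS(\ell,P_\ell)>PS(h,P_\ell),\\ n&\text{otherwise,}\end{cases}$$ and $k_B=\min(k_B^h,k_B^\ell,n)$. Moreover, for every integer $k$ with $k_B<k\le n$, $\Sigma^*$ is not a Bayesian $k$-strong equilibrium.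
   Context: Peer prediction setting. There are $n\ge 2$ agents $[n]$. Each agent $i$ privately observes a signal $\Psi_i\in\{\ell,h\}$ and reports $r_i\in\{\ell,h\}$. Signals are drawn from a common prior $Q$ on $\{\ell,h\}^n$ that is symmetric, i.e., invariant under permutations of the agents. $P(s)$ denotes the marginal probability that an agent has signal $s$. $P(s\mid s')$ denotes the probability that another agent $j\ne i$ has signal $s$ given that agent $i$ has signal $s'$. $P_{s'}=P(\cdot\mid s')$ is the corresponding distribution on $\{\ell,h\}$. Standing assumptions: $P(\ell),P(h)>0$, $P(h\mid h)>P(h\mid\ell)$, $P(h\mid\ell)>0$ and $P(\ell\mid h)>0$. A scoring rule $PS:\{\ell,h\}\times\Delta_{\{\ell,h\}}\to\mathbb R$ is strictly proper if $\mathbb E_{s\sim p}[PS(s,p)]>\mathbb E_{s\sim p}[PS(s,q)]$ for all distributions $p\ne q$. The mechanism gives agent $i$ the utility $v_i=\frac1{n-1}\sum_{j\ne i}PS(r_j,P_{r_i})$. A strategy is a pair $\sigma=(\beta_\ell,\beta_h)\in[0,1]^2$, where $\beta_\ell$ and $\beta_h$ are the probabilities of reporting $h$ given signal $\ell$ and signal $h$, respectively. Given signals, reports are drawn independently. The truthful strategy is $(0,1)$, and $\Sigma^*$ is the profile in which all agents play it. The interim utility $u_i(\Sigma\mid s)$ is the expectation of $v_i$ conditioned on $\Psi_i=s$. A profile $\Sigma$ is a Bayesian $k$-strong equilibrium if there is no set $D\subseteq[n]$ with $|D|\le k$ and no profile $\Sigma'$ such that: (1) agents outside $D$ keep their strategies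 from $\Sigma$; (2) $u_i(\Sigma'\mid s)\ge u_i(\Sigma\mid s)$ for all $i\in D$ and both $s\in\{\ell,h\}$; and (3) strict inequality holds for some $i\in D$ and some $s$. *)

From HB Require Import structures.
From mathcomp Require Import all_boot all_order all_algebra all_fingroup.
From mathcomp Require Import reals.
Set Implicit Arguments. Unset Strict Implicit. Unset Printing Implicit Defensive.
Import Order.TTheory GRing.Theory Num.Theory.
Local Open Scope ring_scope.

(* Signals / reports: [true] = h, [false] = l.
   A distribution on {l,h} is represented by its probability of h, a real in [0,1]. *)

Section PeerPrediction.
Variable R : realType.

Definition exp_score (PS : bool -> R -> R) (p q : R) : R :=
  p * PS true q + (1 - p) * PS false q.

Definition strictly_proper (PS : bool -> R -> R) : Prop :=
  forall p q : R, 0 <= p <= 1 -> 0 <= q <= 1 -> p != q ->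
    exp_score PS p q < exp_score PS p p.

Variable n : nat.

Definition profile := {ffun 'I_n -> bool}.

Definition is_prior (Q : profile -> R) : Prop :=
  (forall psi, 0 <= Q psi) /\ \sum_(psi : profile) Q psi = 1.

Definition symmetric_prior (Q : profile -> R) : Prop :=
  forall (pi : 'S_n) (psi : profile), Q [ffun i => psi (pi i)] = Q psi.

Definition prQ (Q : profile -> R) (E : pred profile) : R :=
  \sum_(psi : profile | E psi) Q psi.

Definition marg_h (Q : profile -> R) (i : 'I_n) : R := prQ Q (fun psi => psi i).

Definition cond_h (Q : profile -> R) (i j : 'I_n) (s' : bool) : R :=
  prQ Q (fun psi => psi j && (psi i == s')) / prQ Q (fun psi => psi i == s').

Definition has_marginals (Q : profile -> R) (ph phh phl : R) : Prop :=
  (forall i, marg_h Q i = ph) /\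
  (forall i j, i != j -> cond_h Q i j true = phh /\ cond_h Q i j false = phl).

(* A strategy is a pair (beta_l, beta_h) of probabilities of reporting h. *)
Definition strategy := (R * R)%type.
Definition valid_strategy (sg : strategy) : Prop :=
  0 <= sg.1 <= 1 /\ 0 <= sg.2 <= 1.
Definition sprofile := 'I_n -> strategy.
Definition valid_sprofile (S : sprofile) : Prop := forall i, valid_strategy (S i).

Definition truthful : strategy := (0, 1).
Definition truthful_profile : sprofile := fun _ => truthful.

Definition beta (sg : strategy) (s : bool) : R := if s then sg.2 else sg.1.

Definition report_prob (S : sprofile) (psi r : profile) : R :=
  \prod_(k : 'I_n) (if r k then beta (S k) (psi k) else 1 - beta (S k) (psi k)).

Definition Pcond (phh phl : R) (r : bool) : R := if r then phh else phl.

Definition payoff (PS : bool -> R -> R) (phh phl : R) (i : 'I_n) (r : profile) : R :=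
  (n.-1)%:R^-1 * \sum_(j : 'I_n | j != i) PS (r j) (Pcond phh phl (r i)).

Definition interim (Q : profile -> R) (PS : bool -> R -> R) (phh phl : R)
    (S : sprofile) (i : 'I_n) (s : bool) : R :=
  (\sum_(psi : profile | psi i == s)
     Q psi * \sum_(r : profile) report_prob S psi r * payoff PS phh phl i r)
  / prQ Q (fun psi => psi i == s).

Definition k_strong_eq (Q : profile -> R) (PS : bool -> R -> R) (phh phl : R)
    (k : int) (S : sprofile) : Prop :=
  ~ exists (D : {set 'I_n}) (S' : sprofile),
      [/\ (#|D|%:Z <= k)%R,
          valid_sprofile S',
          (forall j, j \notin D -> S' j = S j),
          (forall i s, i \in D -> interim Q PS phh phl S i s <= interim Q PS phh phl S' i s) &
          (exists i s, i \in D /\ interim Q PS phh phl S i s < interim Q PS phh phl S' i s)].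

Definition kBh (PS : bool -> R -> R) (phh phl : R) : int :=
  if PS true phh > PS false phh then
    Num.ceil ((n.-1)%:R * (exp_score PS phl phl - exp_score PS phl phh)
              / ((1 - phl) * (PS true phh - PS false phh)))
  else n%:Z.

Definition kBl (PS : bool -> R -> R) (phh phl : R) : int :=
  if PS false phl > PS true phl then
    Num.ceil ((n.-1)%:R * (exp_score PS phh phh - exp_score PS phh phl)
              / (phh * (PS false phl - PS true phl)))
  else n%:Z.

Definition kB (PS : bool -> R -> R) (phh phl : R) : int :=
  Num.min (kBh PS phh phl) (Num.min (kBl PS phh phl) n%:Z).

End PeerPrediction.

(* The interim gain of an agent over truth-telling splits into the
   strict-properness loss of its own misreports and a term
   [A * (PS h - PS l)], where [A] is the average amount by which its peers
   raise the probability of an h report.  A coalition of [d] agents moves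
   [A] by at most [(d - 1) / (n - 1)] and always moves it less for an agent
   seeing h than for one seeing l.  Below [k_B] the ceilings defining [k_B]
   say exactly that this peer effect cannot pay for the properness loss:
   when the score differences at [P_h] and [P_l] have opposite signs this
   holds agent by agent, and when they have the same sign, summing the gains
   of one signal over the coalition shows that nobody misreports it, after
   which no gain is positive.  Above [k_B], a coalition of
   [ceil (...) + 1] agents who always report h (or always l) gains. *)

From HB Require Import structures.
From mathcomp Require Import all_boot all_order all_algebra all_fingroup.
From mathcomp Require Import reals.
From mathcomp Require Import zify ring lra.
Import Order.TTheory GRing.Theory Num.Theory.
Local Open Scope ring_scope.
Set Implicit Arguments. Unset Strict Implicit. Unset Printing Implicit Defensive.

Lemma prod_if2 (R : comPzSemiRingType) (I : finType) (i j : I) (U V : I -> R) :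
  i != j ->
  \prod_k (if k == i then U k else if k == j then V k else 1) = U i * V j.
Proof.
move=> ij; rewrite (bigD1 i) //= eqxx (bigD1 j) /=; last by rewrite eq_sym ij.
rewrite eq_sym (negbTE ij) eqxx big1 ?mulr1 // => k /andP[ki kj].
by rewrite (negbTE ki) (negbTE kj).
Qed.

Lemma sum_indicator (R : pzSemiRingType) (T : finType) (u : T) (G : T -> R) :
  \sum_a (u == a)%:R * G a = G u.
Proof.
rewrite (bigD1 u) //= eqxx mul1r big1 ?addr0 // => a /negbTE.
by rewrite eq_sym => ->; rewrite mul0r.
Qed.

Lemma sum_prod_ffun_pair (R : comPzRingType) (I T : finType) (f : I -> T -> R)
    (g : T -> T -> R) (i j : I) :
  i != j -> (forall k, \sum_t f k t = 1) ->
  \sum_(r : {ffun I -> T}) (\prod_k f k (r k)) * g (r i) (r j) =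
  \sum_a \sum_b f i a * f j b * g a b.
Proof.
move=> ij f1.
pose F a b k t := f k t *
  (if k == i then (t == a)%:R else if k == j then (t == b)%:R else 1).
have split_g (r : {ffun I -> T}) : (\prod_k f k (r k)) * g (r i) (r j) =
    \sum_a \sum_b (\prod_k F a b k (r k)) * g a b.
  have -> : g (r i) (r j) = \sum_a (r i == a)%:R * \sum_b (r j == b)%:R * g a b.
    by rewrite sum_indicator sum_indicator.
  rewrite mulr_sumr; apply: eq_bigr => a _.
  rewrite !mulr_sumr; apply: eq_bigr => b _.
  rewrite /F big_split /= (prod_if2 (fun k => (r k == a)%:R) (fun k => (r k == b)%:R)) //.
  by rewrite !mulrA.
under eq_bigr do rewrite split_g.
rewrite exchange_big /=; apply: eq_bigr => a _.
rewrite exchange_big /=; apply: eq_bigr => b _.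
rewrite -mulr_suml -(bigA_distr_bigA (F a b)) /=; congr (_ * _).
rewrite -(prod_if2 (fun k => f k a) (fun k => f k b) ij).
apply: eq_bigr => k _; rewrite /F.
case: (k == i); first by under eq_bigr do rewrite mulrC eq_sym; rewrite sum_indicator.
case: (k == j); first by under eq_bigr do rewrite mulrC eq_sym; rewrite sum_indicator.
by under eq_bigr do rewrite mulr1; apply: f1.
Qed.

(* Gain of an agent who misreports with probability [z]: [D] is the
   expected-score loss of the misreported prediction, [A] the excess
   probability that a peer reports h, and [e0], [e1] the score differences
   [PS h - PS l] at the truthful and at the misreported prediction. *)
Definition misreport_gain (R : pzRingType) (D e0 e1 z A : R) : R :=
  - z * D + A * ((1 - z) * e0 + z * e1).

Section MisreportGain.

Variable R : realFieldType.

Lemma misreport_gainN (D e0 e1 z A : R) :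
  misreport_gain D e0 e1 z A = misreport_gain D (- e0) (- e1) z (- A).
Proof. by rewrite /misreport_gain; ring. Qed.

Lemma misreport_gain_le0 (D e0 e1 z A : R) :
  0 <= D -> 0 <= z <= 1 -> 0 <= e0 -> 0 <= e1 -> A <= 0 ->
  misreport_gain D e0 e1 z A <= 0.
Proof.
move=> D0 /andP[z0 z1] e00 e10 A0.
have c0 : 0 <= (1 - z) * e0 + z * e1 by apply: addr_ge0; apply: mulr_ge0; lra.
have : A * ((1 - z) * e0 + z * e1) <= 0 by apply: mulr_le0_ge0.
have : 0 <= z * D by apply: mulr_ge0.
by rewrite /misreport_gain; lra.
Qed.

Lemma misreport_gain_lt0 (D e0 e1 z A U : R) :
  e0 < 0 -> 0 < e1 -> 0 <= z <= 1 -> 0 < A -> A <= U -> U * e1 < D ->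
  misreport_gain D e0 e1 z A < 0.
Proof.
move=> e00 e10 /andP[z0 z1] A0 AU UD.
have AD : A * e1 - D < 0 by have := ler_wpM2r (ltW e10) AU; lra.
have Ae0 : A * e0 < 0 by rewrite pmulr_rlt0.
have h0 : (1 - z) * (A * e0) <= 0 by apply: mulr_ge0_le0; lra.
have h1 : z * (A * e1 - D) <= 0 by apply: mulr_ge0_le0; lra.
rewrite /misreport_gain; case: (ltrP 0 z) => [zpos | zle0].
  by have := pmulr_rlt0 (A * e1 - D) zpos; rewrite AD; lra.
have z0' : z = 0 by lra.
by rewrite z0'; lra.
Qed.

Lemma misreport_gain_le (D e0 e1 e z A U : R) :
  0 <= e0 <= e -> 0 <= e1 <= e -> 0 <= z <= 1 -> 0 <= U -> A <= U ->
  misreport_gain D e0 e1 z A <= U * e - z * D.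
Proof.
move=> /andP[e00 e0e] /andP[e10 e1e] /andP[z0 z1] U0 AU.
have c0 : 0 <= (1 - z) * e0 + z * e1 by nra.
have c1 : (1 - z) * e0 + z * e1 <= e by nra.
suff : A * ((1 - z) * e0 + z * e1) <= U * e by rewrite /misreport_gain; lra.
case: (lerP 0 A) => A0; nra.
Qed.

End MisreportGain.

Section CoalitionSums.

Variables (R : realFieldType) (I : finType) (D : {set I}) (z : I -> R).
Hypothesis z_out : forall j, j \notin D -> z j = 0.

Lemma sum_coalition : \sum_j z j = \sum_(j in D) z j.
Proof. by rewrite (bigID (mem D)) /= [X in _ + X]big1 ?addr0. Qed.

Lemma sum_others_indicator i :
  i \in D -> \sum_(j | j != i) (j \in D)%:R = #|D|%:R - 1 :> R.
Proof.
move=> iD; have sumD : \sum_j (j \in D)%:R = #|D|%:R :> R.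
  by rewrite -sumr_const [RHS]big_mkcond; apply: eq_bigr => j _; case: (j \in D).
by rewrite -sumD [X in _ = X - _](bigD1 i) //= iD addrC addrK.
Qed.

Lemma sum_others_le_card i :
  i \in D -> (forall j, z j <= 1) -> \sum_(j | j != i) z j <= #|D|%:R - 1.
Proof.
move=> iD z1; rewrite -(sum_others_indicator iD).
by apply: ler_sum => j _; case jD: (j \in D); [exact: z1 | rewrite z_out ?jD].
Qed.

Lemma sum_coalition_others :
  \sum_(i in D) \sum_(j | j != i) z j = (#|D|%:R - 1) * \sum_j z j.
Proof.
rewrite (eq_bigr (fun i => \sum_j z j - z i)); last first.
  by move=> i _; rewrite [X in _ = X - _](bigD1 i) //= addrC addrK.
by rewrite sumrB sumr_const -sum_coalition mulrBl mul1r mulr_natl.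
Qed.

Lemma coalition_vanishes (K L : R) :
  (forall j, 0 <= z j) -> (#|D|%:R - 1) * K < L ->
  (forall i, i \in D -> L * z i <= K * \sum_(j | j != i) z j) ->
  forall j, z j = 0.
Proof.
move=> z0 KL hz j.
have S0 : 0 <= \sum_j z j by apply: sumr_ge0.
have SK : L * \sum_j z j <= (#|D|%:R - 1) * K * \sum_j z j.
  rewrite -mulrA mulrCA -sum_coalition_others sum_coalition !mulr_sumr.
  exact: ler_sum.
have S_eq0 : \sum_j z j = 0.
  apply/eqP; rewrite eq_le S0 andbT leNgt; apply/negP => Spos.
  by move: SK; rewrite ler_pM2r //; lra.
by apply: (psumr_eq0P _ S_eq0).
Qed.

End CoalitionSums.

Section CoalitionGains.

Variables (R : realFieldType) (I : finType) (D : {set I}).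
Variables (phh phl dh dl Dh Dl w : R) (x y : I -> R).
Hypotheses (phl_gt0 : 0 < phl) (phl_lt_phh : phl < phh) (phh_lt1 : phh < 1).
Hypotheses (Dh_gt0 : 0 < Dh) (Dl_gt0 : 0 < Dl) (w_gt0 : 0 < w) (dl_lt_dh : dl < dh).
Hypotheses (x01 : forall j, 0 <= x j <= 1) (y01 : forall j, 0 <= y j <= 1).
Hypotheses (x_out : forall j, j \notin D -> x j = 0) (y_out : forall j, j \notin D -> y j = 0).
Hypothesis bound_h : 0 < dh -> w * ((#|D|%:R - 1) * ((1 - phl) * dh)) < Dl.
Hypothesis bound_l : dl < 0 -> w * ((#|D|%:R - 1) * (phh * - dl)) < Dh.

(* [x j] and [y j] are the probabilities that [j] misreports a signal h and l,
   [w] stands for [1 / (n - 1)], and [A i], [B i] are the shifts of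
   [misreport_gain] seen by [i] when its signal is h and l. *)
Let X i := \sum_(j | j != i) x j.
Let Y i := \sum_(j | j != i) y j.
Let A i := w * ((1 - phh) * Y i - phh * X i).
Let B i := w * ((1 - phl) * Y i - phl * X i).
Let gain_h i := misreport_gain Dh dh dl (x i) (A i).
Let gain_l i := misreport_gain Dl dl dh (y i) (B i).
Hypothesis gains_ge0 : forall i, i \in D -> 0 <= gain_h i /\ 0 <= gain_l i.

Let x_ge0 j : 0 <= x j. Proof. by case/andP: (x01 j). Qed.
Let y_ge0 j : 0 <= y j. Proof. by case/andP: (y01 j). Qed.
Let X_ge0 i : 0 <= X i. Proof. exact: sumr_ge0. Qed.
Let Y_ge0 i : 0 <= Y i. Proof. exact: sumr_ge0. Qed.
Let phh_gt0 : 0 < phh. Proof. exact: lt_trans phl_gt0 phl_lt_phh. Qed.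
Let one_minus_phl_gt0 : 0 < 1 - phl.
Proof. by rewrite subr_gt0 (lt_trans phl_lt_phh). Qed.
Let one_minus_phh_gt0 : 0 < 1 - phh. Proof. by rewrite subr_gt0. Qed.

Lemma coalition_gains_le0_mixed : 0 < dh -> dl < 0 ->
  forall i, i \in D -> gain_h i <= 0 /\ gain_l i <= 0.
Proof.
(* The bounds make a shift of the wrong sign unprofitable by itself, so
   [B i <= 0 <= A i]; but peers can only lower [A i] relative to [B i]. *)
move=> dh_gt0 dl_lt0 i iD; have [gh0 gl0] := gains_ge0 iD.
have X1 : X i <= #|D|%:R - 1 by apply: sum_others_le_card => // j; case/andP: (x01 j).
have Y1 : Y i <= #|D|%:R - 1 by apply: sum_others_le_card => // j; case/andP: (y01 j).
have pX := mulr_ge0 (ltW phl_gt0) (X_ge0 i).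
have qY := mulr_ge0 (ltW one_minus_phh_gt0) (Y_ge0 i).
have B_le0 : B i <= 0.
  rewrite leNgt; apply/negP => B_gt0.
  suff : gain_l i < 0 by lra.
  apply: (misreport_gain_lt0 (U := w * ((#|D|%:R - 1) * (1 - phl)))) => //.
    rewrite ler_pM2l //.
    by have := ler_wpM2l (ltW one_minus_phl_gt0) Y1; lra.
  by move: (bound_h dh_gt0); rewrite !mulrA; lra.
have A_ge0 : 0 <= A i.
  rewrite leNgt; apply/negP => A_lt0.
  suff : gain_h i < 0 by lra.
  rewrite /gain_h misreport_gainN.
  apply: (misreport_gain_lt0 (U := w * ((#|D|%:R - 1) * phh))); rewrite ?oppr_lt0 ?oppr_gt0 //.
    rewrite -mulrN ler_pM2l //.
    by have := ler_wpM2l (ltW phh_gt0) X1; lra.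
  by move: (bound_l dl_lt0); rewrite !mulrA; lra.
have AB : B i - A i = w * ((phh - phl) * (X i + Y i)) by rewrite /A /B; ring.
have A_le_B : 0 <= B i - A i.
  rewrite AB; apply: (mulr_ge0 (ltW w_gt0) (mulr_ge0 _ (addr_ge0 (X_ge0 i) (Y_ge0 i)))).
  by rewrite subr_ge0 ltW.
have A0 : A i = 0 by lra.
have B0 : B i = 0 by lra.
rewrite /gain_h /gain_l /misreport_gain A0 B0 !mul0r !addr0 !mulNr !oppr_le0.
by split; [exact: mulr_ge0 (x_ge0 i) (ltW Dh_gt0) | exact: mulr_ge0 (y_ge0 i) (ltW Dl_gt0)].
Qed.

Lemma coalition_gains_le0_dl_ge0 : 0 <= dl ->
  forall i, i \in D -> gain_h i <= 0 /\ gain_l i <= 0.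
Proof.
(* A member's l-gain is at most its share of the others' l-misreports minus
   its own loss; summed over the coalition, the bound [bound_h] makes this
   negative unless nobody misreports an l. *)
move=> dl_ge0.
have dh_gt0 : 0 < dh := le_lt_trans dl_ge0 dl_lt_dh.
have y0 : forall j, y j = 0.
  apply: (coalition_vanishes y_out y_ge0 (K := w * (1 - phl) * dh) (L := Dl)).
    by have := bound_h dh_gt0; lra.
  move=> k kD; have [_ gl0] := gains_ge0 kD.
  have U0 := mulr_ge0 (ltW w_gt0) (mulr_ge0 (ltW one_minus_phl_gt0) (Y_ge0 k)).
  have pX := mulr_ge0 (ltW w_gt0) (mulr_ge0 (ltW phl_gt0) (X_ge0 k)).
  have : gain_l k <= w * ((1 - phl) * Y k) * dh - y k * Dl.
    apply: misreport_gain_le; rewrite ?dl_ge0 ?(ltW dl_lt_dh) ?lexx ?(ltW dh_gt0) //.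
    by rewrite /B; lra.
  by rewrite -/(Y k); lra.
move=> i iD; have Y0 : Y i = 0 by rewrite /Y big1.
have pX := mulr_ge0 (ltW w_gt0) (mulr_ge0 (ltW phh_gt0) (X_ge0 i)).
have qX := mulr_ge0 (ltW w_gt0) (mulr_ge0 (ltW phl_gt0) (X_ge0 i)).
have A_le0 : A i <= 0 by rewrite /A Y0; lra.
have B_le0 : B i <= 0 by rewrite /B Y0; lra.
split; first exact: misreport_gain_le0 (ltW Dh_gt0) (x01 i) (ltW dh_gt0) dl_ge0 A_le0.
exact: misreport_gain_le0 (ltW Dl_gt0) (y01 i) dl_ge0 (ltW dh_gt0) B_le0.
Qed.

Lemma coalition_gains_le0_dh_le0 : dh <= 0 ->
  forall i, i \in D -> gain_h i <= 0 /\ gain_l i <= 0.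
Proof.
(* The previous case with h and l exchanged, through [misreport_gainN]. *)
move=> dh_le0.
have dl_lt0 : dl < 0 := lt_le_trans dl_lt_dh dh_le0.
have x0 : forall j, x j = 0.
  apply: (coalition_vanishes x_out x_ge0 (K := w * phh * - dl) (L := Dh)).
    by have := bound_l dl_lt0; lra.
  move=> k kD; have [gh0 _] := gains_ge0 kD.
  have U0 := mulr_ge0 (ltW w_gt0) (mulr_ge0 (ltW phh_gt0) (X_ge0 k)).
  have qY := mulr_ge0 (ltW w_gt0) (mulr_ge0 (ltW one_minus_phh_gt0) (Y_ge0 k)).
  have : gain_h k <= w * (phh * X k) * - dl - x k * Dh.
    rewrite /gain_h misreport_gainN; apply: misreport_gain_le => //.
    - by rewrite oppr_ge0 dh_le0 lerN2 ltW.
    - by rewrite oppr_ge0 (ltW dl_lt0) lexx.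
    - by rewrite /A; lra.
  by rewrite -/(X k); lra.
move=> i iD; have X0 : X i = 0 by rewrite /X big1.
have qY := mulr_ge0 (ltW w_gt0) (mulr_ge0 (ltW one_minus_phh_gt0) (Y_ge0 i)).
have pY := mulr_ge0 (ltW w_gt0) (mulr_ge0 (ltW one_minus_phl_gt0) (Y_ge0 i)).
have NA_le0 : - A i <= 0 by rewrite /A X0; lra.
have NB_le0 : - B i <= 0 by rewrite /B X0; lra.
have [mdh mdl] : 0 <= - dh /\ 0 <= - dl by rewrite !oppr_ge0 dh_le0 ltW.
rewrite /gain_h /gain_l !(misreport_gainN _ dh) !(misreport_gainN _ dl).
split; first exact: misreport_gain_le0 (ltW Dh_gt0) (x01 i) mdh mdl NA_le0.
exact: misreport_gain_le0 (ltW Dl_gt0) (y01 i) mdl mdh NB_le0.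
Qed.

Lemma coalition_gains_le0 : forall i, i \in D -> gain_h i <= 0 /\ gain_l i <= 0.
Proof.
case: (lerP 0 dl) => [|dl_lt0]; first exact: coalition_gains_le0_dl_ge0.
case: (ltrP 0 dh) => [dh_gt0|]; last exact: coalition_gains_le0_dh_le0.
exact: coalition_gains_le0_mixed.
Qed.

End CoalitionGains.

Section ScoringRule.

Variables (R : realType) (PS : bool -> R -> R).
Hypothesis PS_proper : strictly_proper PS.

Lemma score_gap_gt0 (p q : R) : 0 <= p <= 1 -> 0 <= q <= 1 -> p != q ->
  0 < exp_score PS p p - exp_score PS p q.
Proof. by move=> p01 q01 pq; rewrite subr_gt0; apply: PS_proper. Qed.

Lemma score_diff_lt (p q : R) : 0 <= q -> q < p -> p <= 1 ->
  PS true q - PS false q < PS true p - PS false p.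
Proof.
move=> q0 qp p1.
have p01 : 0 <= p <= 1 by apply/andP; split; lra.
have q01 : 0 <= q <= 1 by apply/andP; split; lra.
have gp := score_gap_gt0 p01 q01 (negbT (gt_eqF qp)).
have gq := score_gap_gt0 q01 p01 (negbT (lt_eqF qp)).
have key : (exp_score PS p p - exp_score PS p q) + (exp_score PS q q - exp_score PS q p)
  = (p - q) * ((PS true p - PS false p) - (PS true q - PS false q)).
  by rewrite /exp_score; ring.
have : 0 < (p - q) * ((PS true p - PS false p) - (PS true q - PS false q)).
  by rewrite -key addr_gt0.
by rewrite pmulr_rgt0 ?subr_gt0.
Qed.

End ScoringRule.

Lemma ceil_ge_nat_lt (R : archiRealDomainType) (d : nat) (x : R) :
  d%:Z <= Num.ceil x -> d%:R - 1 < x.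
Proof.
move=> h; have : d%:Z - 1 < Num.ceil x by lia.
by rewrite ceil_gt_int intrB.
Qed.

Lemma ceil_lt_witness (R : archiRealDomainType) (x : R) (k : int) :
  0 < x -> Num.ceil x < k -> exists2 a : nat, (0 < a)%N & a.+1%:Z <= k /\ x <= a%:R.
Proof.
move=> x_gt0 xk; have ceil_pos : 0 < Num.ceil x by rewrite ceil_gt0.
exists `|Num.ceil x|%N; first lia.
split; first lia.
by rewrite natr_absz ger0_norm ?ceil_ge // ltW.
Qed.

Section CoalitionBounds.

Variables (R : realType) (n : nat) (PS : bool -> R -> R) (phh phl : R) (d : nat).
Hypothesis n_gt1 : (1 < n)%N.

Let c_gt0 : 0 < (n.-1)%:R :> R.
Proof. by rewrite ltr0n -ltnS prednK // ltnW. Qed.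

Lemma card_le_kBh : d%:Z <= kBh n PS phh phl -> phl < 1 ->
  0 < PS true phh - PS false phh ->
  (n.-1)%:R^-1 * ((d%:R - 1) * ((1 - phl) * (PS true phh - PS false phh))) <
  exp_score PS phl phl - exp_score PS phl phh.
Proof.
move=> + phl_lt1 dh_gt0; rewrite /kBh ifT; last by rewrite -subr_gt0.
have den_gt0 : 0 < (1 - phl) * (PS true phh - PS false phh).
  by rewrite mulr_gt0 // subr_gt0.
by move/ceil_ge_nat_lt; rewrite ltr_pdivlMr // ltr_pdivrMl // mulrA.
Qed.

Lemma card_le_kBl : d%:Z <= kBl n PS phh phl -> 0 < phh ->
  PS true phl - PS false phl < 0 ->
  (n.-1)%:R^-1 * ((d%:R - 1) * (phh * - (PS true phl - PS false phl))) <
  exp_score PS phh phh - exp_score PS phh phl.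
Proof.
move=> + phh_gt0 dl_lt0; rewrite /kBl opprB ifT; last by rewrite -subr_lt0.
have den_gt0 : 0 < phh * (PS false phl - PS true phl).
  by rewrite mulr_gt0 // subr_gt0 -subr_lt0.
by move/ceil_ge_nat_lt; rewrite ltr_pdivlMr // ltr_pdivrMl // mulrA.
Qed.

Lemma kBh_lt_witness (k : int) : kBh n PS phh phl < k -> k <= n%:Z -> phl < 1 ->
  0 < exp_score PS phl phl - exp_score PS phl phh ->
  exists2 a : nat, (0 < a)%N & [/\ a.+1%:Z <= k, 0 < PS true phh - PS false phh &
    (n.-1)%:R * (exp_score PS phl phl - exp_score PS phl phh) <=
    a%:R * ((1 - phl) * (PS true phh - PS false phh))].
Proof.
move=> + kn phl_lt1 Dl_gt0; rewrite /kBh; case: ifP => [dh_gt0 | _ nk]; last first.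
  by have := lt_le_trans nk kn; rewrite ltxx.
rewrite -subr_gt0 in dh_gt0.
have den_gt0 : 0 < (1 - phl) * (PS true phh - PS false phh).
  by rewrite mulr_gt0 // subr_gt0.
move/(ceil_lt_witness (divr_gt0 (mulr_gt0 c_gt0 Dl_gt0) den_gt0)) => [a a_gt0 [ak Xa]].
by exists a => //; split; rewrite -?ler_pdivrMr.
Qed.

Lemma kBl_lt_witness (k : int) : kBl n PS phh phl < k -> k <= n%:Z -> 0 < phh ->
  0 < exp_score PS phh phh - exp_score PS phh phl ->
  exists2 a : nat, (0 < a)%N & [/\ a.+1%:Z <= k, PS true phl - PS false phl < 0 &
    (n.-1)%:R * (exp_score PS phh phh - exp_score PS phh phl) <=
    a%:R * (phh * - (PS true phl - PS false phl))].
Proof.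
move=> + kn phh_gt0 Dh_gt0; rewrite /kBl opprB; case: ifP => [dl_lt0 | _ nk]; last first.
  by have := lt_le_trans nk kn; rewrite ltxx.
rewrite -subr_gt0 -opprB oppr_gt0 in dl_lt0.
have den_gt0 : 0 < phh * (PS false phl - PS true phl).
  by rewrite mulr_gt0 // subr_gt0 -subr_lt0.
move/(ceil_lt_witness (divr_gt0 (mulr_gt0 c_gt0 Dh_gt0) den_gt0)) => [a a_gt0 [ak Xa]].
by exists a => //; split; rewrite -?ler_pdivrMr.
Qed.

End CoalitionBounds.

Lemma exists_card_set (n m : nat) : (m <= n)%N -> exists D : {set 'I_n}, #|D| = m.
Proof.
move=> mn; exists [set widen_ord mn j | j : 'I_m].
rewrite card_imset ?card_ord // => u v /(congr1 val) eq_uv.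
by apply: val_inj.
Qed.

Definition misreport_prob (R : realType) (sg : strategy R) (s : bool) : R :=
  if s then 1 - sg.2 else sg.1.

Lemma misreport_prob01 (R : realType) (sg : strategy R) s :
  valid_strategy sg -> 0 <= misreport_prob sg s <= 1.
Proof.
by case=> /andP[? ?] /andP[? ?]; case: s; apply/andP; split; rewrite /misreport_prob /=; lra.
Qed.

Section Interim.

Variables (R : realType) (n : nat) (Q : profile n -> R) (PS : bool -> R -> R).
Variables (ph phh phl : R).
Hypotheses (HQ : is_prior Q) (Hph : 0 < ph < 1) (HM : has_marginals Q ph phh phl).

Let pr_signal i s := prQ Q (fun psi => psi i == s).

Lemma pr_signal_neq0 i s : pr_signal i s != 0.
Proof.
have [[_ Q1] [Hh _]] := (HQ, HM).
have /andP[ph0 ph1] := Hph.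
have mh : pr_signal i true = ph.
  by rewrite -(Hh i) /pr_signal /marg_h /prQ; apply: eq_bigl => psi; rewrite eqb_id.
have ml : pr_signal i false = 1 - ph.
  rewrite -Q1 -mh /pr_signal /prQ [in RHS](bigID (fun psi : profile n => psi i)) /=.
  rewrite (eq_bigl (fun psi : profile n => psi i == true)); last by move=> psi; rewrite eqb_id.
  by rewrite addrC addrK; apply: eq_bigl => psi; case: (psi i).
by case: s; rewrite ?mh ?ml; apply/lt0r_neq0; lra.
Qed.

Lemma sum_signal_pair i j s (K : bool -> R) : i != j ->
  \sum_(psi : profile n | psi i == s) Q psi * K (psi j) =
  pr_signal i s * (Pcond phh phl s * K true + (1 - Pcond phh phl s) * K false).
Proof.
move=> ij.
have mh : prQ Q (fun psi => (psi i == s) && psi j) =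
    Pcond phh phl s * pr_signal i s.
  have [ch cl] := HM.2 i j ij.
  have <- : cond_h Q i j s = Pcond phh phl s by case: s.
  rewrite /cond_h divfK ?pr_signal_neq0 //.
  by apply: eq_bigl => psi; rewrite andbC.
have ml : prQ Q (fun psi => (psi i == s) && ~~ psi j) =
    pr_signal i s - Pcond phh phl s * pr_signal i s.
  by rewrite -mh /pr_signal /prQ [in RHS](bigID (fun psi : profile n => psi j)) /= addrC addrK.
rewrite (bigID (fun psi : profile n => psi j)) /=.
transitivity (prQ Q (fun psi => (psi i == s) && psi j) * K true +
              prQ Q (fun psi => (psi i == s) && ~~ psi j) * K false).
  rewrite /prQ !mulr_suml; congr (_ + _); apply: eq_bigr => psi /andP[_].
    by move->.
  by move/negbTE->.
by rewrite mh ml; ring.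
Qed.

Definition report_pr (sg : strategy R) (t a : bool) : R :=
  if a then beta sg t else 1 - beta sg t.

(* probability that agent [j] reports h, given that another agent has signal [s] *)
Definition report_h_given (S : sprofile R n) (j : 'I_n) (s : bool) : R :=
  Pcond phh phl s * beta (S j) true + (1 - Pcond phh phl s) * beta (S j) false.

Lemma interimE S i s :
  interim Q PS phh phl S i s =
  (n.-1)%:R^-1 * \sum_(j | j != i)
    (beta (S i) s * exp_score PS (report_h_given S j s) phh +
     (1 - beta (S i) s) * exp_score PS (report_h_given S j s) phl).
Proof.
pose K j (t : bool) := \sum_a \sum_b
  report_pr (S i) s a * report_pr (S j) t b * PS b (Pcond phh phl a).
have payoffE (psi : profile n) : psi i == s ->
    \sum_r report_prob S psi r * payoff PS phh phl i r =
    (n.-1)%:R^-1 * \sum_(j | j != i) K j (psi j).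
  move=> /eqP psis; rewrite /payoff.
  under eq_bigr do rewrite mulrCA.
  rewrite -mulr_sumr; congr (_ * _).
  under eq_bigr do rewrite mulr_sumr.
  rewrite exchange_big /=; apply: eq_bigr => j ji.
  have Hpr k : \sum_a report_pr (S k) (psi k) a = 1.
    by rewrite big_bool /report_pr /= addrC subrK.
  rewrite /report_prob (@sum_prod_ffun_pair _ _ _ (fun k => report_pr (S k) (psi k))
    (fun a b => PS b (Pcond phh phl a)) i j) 1?eq_sym //.
  by rewrite /K psis.
rewrite /interim (eq_bigr (fun psi => Q psi *
  ((n.-1)%:R^-1 * \sum_(j | j != i) K j (psi j)))); last by move=> psi /payoffE->.
under eq_bigr do rewrite mulrCA.
rewrite -mulr_sumr -mulrA; congr (_ * _).
under eq_bigr do rewrite mulr_sumr.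
rewrite exchange_big mulr_suml; apply: eq_bigr => j ji.
rewrite sum_signal_pair 1?eq_sym // mulrC mulKf ?pr_signal_neq0 //.
rewrite /K /report_pr /report_h_given /exp_score !big_bool /=.
ring.
Qed.

Hypothesis n_gt1 : (1 < n)%N.

Let c_gt0 : 0 < (n.-1)%:R :> R.
Proof. by rewrite ltr0n -ltnS prednK // ltnW. Qed.

Lemma sum_others_const (i : 'I_n) (A : R) : \sum_(j | j != i) A = (n.-1)%:R * A.
Proof. by rewrite sumr_const cardC1 card_ord mulr_natl. Qed.

Definition report_h_shift S i s : R :=
  (n.-1)%:R^-1 * \sum_(j | j != i) (report_h_given S j s - Pcond phh phl s).

Lemma interim_sub_truthful S i s
    (p := Pcond phh phl s) (p' := Pcond phh phl (~~ s)) :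
  interim Q PS phh phl S i s - interim Q PS phh phl (@truthful_profile R n) i s =
  misreport_gain (exp_score PS p p - exp_score PS p p')
    (PS true p - PS false p) (PS true p' - PS false p')
    (misreport_prob (S i) s) (report_h_shift S i s).
Proof.
have c0 := lt0r_neq0 c_gt0.
have -> : interim Q PS phh phl (@truthful_profile R n) i s = exp_score PS p p.
  rewrite interimE (eq_bigr (fun=> exp_score PS p p)) ?sum_others_const ?mulKf //.
  move=> j _; rewrite /report_h_given /truthful_profile /p; clear p p'.
  by case: s; rewrite /= /exp_score; ring.
rewrite interimE /report_h_shift; set b := beta (S i) s.
rewrite (eq_bigr (fun j => (b * exp_score PS p phh + (1 - b) * exp_score PS p phl) +
  (report_h_given S j s - p) * (b * (PS true phh - PS false phh) +
                                (1 - b) * (PS true phl - PS false phl)))); last first.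
  by move=> j _; rewrite /exp_score; ring.
rewrite big_split /= sum_others_const -mulr_suml /misreport_gain /misreport_prob.
rewrite /b /p' /p; clear p p' b; by case: s => /=; field.
Qed.

Lemma report_h_shiftE S i s (p := Pcond phh phl s) :
  report_h_shift S i s = (n.-1)%:R^-1 *
    ((1 - p) * \sum_(j | j != i) misreport_prob (S j) false -
     p * \sum_(j | j != i) misreport_prob (S j) true).
Proof.
rewrite /report_h_shift; congr (_ * _).
rewrite !mulr_sumr -sumrB; apply: eq_bigr => j _.
by rewrite /report_h_given /misreport_prob /beta /p; ring.
Qed.

Hypotheses (phl_gt0 : 0 < phl) (phl_lt_phh : phl < phh) (phh_lt1 : phh < 1).
Hypothesis PS_proper : strictly_proper PS.

Let phh01 : 0 <= phh <= 1.
Proof. by rewrite !ltW // (lt_trans phl_gt0). Qed.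

Let phl01 : 0 <= phl <= 1.
Proof. by rewrite !ltW // (lt_trans phl_lt_phh). Qed.

Let Dh_gt0 : 0 < exp_score PS phh phh - exp_score PS phh phl.
Proof. by apply: score_gap_gt0; rewrite // gt_eqF. Qed.

Let Dl_gt0 : 0 < exp_score PS phl phl - exp_score PS phl phh.
Proof. by apply: score_gap_gt0; rewrite // lt_eqF. Qed.

Lemma truthful_kB_strong_eq :
  k_strong_eq Q PS phh phl (kB n PS phh phl) (@truthful_profile R n).
Proof.
move=> [D [S' [HD HV Hout HG [i [s [iD Hlt]]]]]].
suff : interim Q PS phh phl S' i s <= interim Q PS phh phl (@truthful_profile R n) i s.
  by rewrite leNgt Hlt.
have [D_le_kBh D_le_kBl] : #|D|%:Z <= kBh n PS phh phl /\ #|D|%:Z <= kBl n PS phh phl.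
  by move: HD; rewrite /kB !le_min => /andP[-> /andP[-> _]].
have w_gt0 : 0 < (n.-1)%:R^-1 :> R by rewrite invr_gt0.
have x_out j : j \notin D -> misreport_prob (S' j) true = 0.
  by move/Hout->; rewrite /misreport_prob subrr.
have y_out j : j \notin D -> misreport_prob (S' j) false = 0 by move/Hout->.
have gains := coalition_gains_le0 phl_gt0 phl_lt_phh phh_lt1 Dh_gt0 Dl_gt0 w_gt0
  (score_diff_lt PS_proper (ltW phl_gt0) phl_lt_phh (ltW phh_lt1))
  (fun j => misreport_prob01 true (HV j)) (fun j => misreport_prob01 false (HV j))
  x_out y_out (card_le_kBh n_gt1 D_le_kBh (lt_trans phl_lt_phh phh_lt1))
  (card_le_kBl n_gt1 D_le_kBl (lt_trans phl_gt0 phl_lt_phh)).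
have gain_ge0 k s' : k \in D -> 0 <= interim Q PS phh phl S' k s' -
    interim Q PS phh phl (@truthful_profile R n) k s'.
  by move=> kD; rewrite subr_ge0; apply: HG.
suff [gh gl] : interim Q PS phh phl S' i true -
            interim Q PS phh phl (@truthful_profile R n) i true <= 0 /\
          interim Q PS phh phl S' i false -
            interim Q PS phh phl (@truthful_profile R n) i false <= 0.
  by case: s {Hlt}; rewrite -subr_le0.
rewrite !interim_sub_truthful !report_h_shiftE; apply: gains iD => k kD.
have := gain_ge0 k true kD; have := gain_ge0 k false kD.
by rewrite !interim_sub_truthful !report_h_shiftE => ? ?; split.
Qed.

Definition coalition_profile (D : {set 'I_n}) (sg : strategy R) : sprofile R n :=
  fun j => if j \in D then sg else truthful R.

(* gain of each member of a coalition of [a.+1] agents that all report h with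
   probability [t], whatever their signal *)
Definition coalition_gain (a : nat) (t : R) (s : bool) : R :=
  let p := Pcond phh phl s in let p' := Pcond phh phl (~~ s) in
  misreport_gain (exp_score PS p p - exp_score PS p p')
    (PS true p - PS false p) (PS true p' - PS false p')
    (misreport_prob (t, t) s) ((n.-1)%:R^-1 * (a%:R * (t - p))).

Lemma interim_coalition_sub_truthful (D : {set 'I_n}) (t : R) i s : i \in D ->
  interim Q PS phh phl (coalition_profile D (t, t)) i s -
  interim Q PS phh phl (@truthful_profile R n) i s = coalition_gain #|D|.-1 t s.
Proof.
move=> iD; rewrite interim_sub_truthful /coalition_gain {1}/coalition_profile iD.
congr (misreport_gain _ _ _ _ (_ * _)).
have D_gt0 : (0 < #|D|)%N by apply/card_gt0P; exists i.
rewrite -subn1 natrB // -(sum_others_indicator R iD) mulr_suml; apply: eq_bigr => j _.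
by rewrite /report_h_given /coalition_profile; case: (j \in D); rewrite /beta /=; ring.
Qed.

Lemma coalition_not_strong_eq (k : int) (a : nat) (t : R) :
  a.+1%:Z <= k -> (a.+1 <= n)%N -> 0 <= t <= 1 ->
  (forall s, 0 <= coalition_gain a t s) -> (exists s, 0 < coalition_gain a t s) ->
  ~ k_strong_eq Q PS phh phl k (@truthful_profile R n).
Proof.
move=> ak an t01 gain_ge0 [s0 gain_gt0]; apply.
have [D cardD] := exists_card_set an.
have [i0 i0D] : exists i0, i0 \in D by apply/card_gt0P; rewrite cardD.
exists D, (coalition_profile D (t, t)); split; rewrite ?cardD //.
- by move=> j; rewrite /coalition_profile; case: (j \in D); split; rewrite /= ?lexx ?ler01.
- by move=> j /negbTE jD; rewrite /coalition_profile jD.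
- by move=> i s iD; rewrite -subr_ge0 interim_coalition_sub_truthful // cardD.
- by exists i0, s0; rewrite -subr_gt0 interim_coalition_sub_truthful // cardD.
Qed.

Lemma not_strong_eq_above_kBh (k : int) : kBh n PS phh phl < k -> k <= n%:Z ->
  ~ k_strong_eq Q PS phh phl k (@truthful_profile R n).
Proof.
move=> kBk kn.
have [a a_gt0 [ak dh_gt0 Dl_le]] :=
  kBh_lt_witness n_gt1 kBk kn (lt_trans phl_lt_phh phh_lt1) Dl_gt0.
have a_gt0' : 0 < a%:R :> R by rewrite ltr0n.
have gain_h_gt0 : 0 < (n.-1)%:R^-1 * (a%:R * (1 - phh)) * (PS true phh - PS false phh).
  by rewrite !mulr_gt0 ?invr_gt0 // subr_gt0.
have gain_l_ge0 : exp_score PS phl phl - exp_score PS phl phh <=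
    (n.-1)%:R^-1 * (a%:R * (1 - phl)) * (PS true phh - PS false phh).
  by rewrite -mulrA ler_pdivlMl // -mulrA.
apply: (coalition_not_strong_eq (a := a) (t := 1)) => //.
- by rewrite -lez_nat (le_trans ak kn).
- by rewrite lexx ler01.
- by case; rewrite /coalition_gain /misreport_gain /misreport_prob /=; lra.
- by exists true; rewrite /coalition_gain /misreport_gain /misreport_prob /=; lra.
Qed.

Lemma not_strong_eq_above_kBl (k : int) : kBl n PS phh phl < k -> k <= n%:Z ->
  ~ k_strong_eq Q PS phh phl k (@truthful_profile R n).
Proof.
move=> kBk kn.
have [a a_gt0 [ak dl_lt0 Dh_le]] :=
  kBl_lt_witness n_gt1 kBk kn (lt_trans phl_gt0 phl_lt_phh) Dh_gt0.
have a_gt0' : 0 < a%:R :> R by rewrite ltr0n.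
have gain_l_gt0 : 0 < (n.-1)%:R^-1 * (a%:R * phl) * - (PS true phl - PS false phl).
  by rewrite !mulr_gt0 ?invr_gt0 // oppr_gt0.
have gain_h_ge0 : exp_score PS phh phh - exp_score PS phh phl <=
    (n.-1)%:R^-1 * (a%:R * phh) * - (PS true phl - PS false phl).
  by rewrite -mulrA ler_pdivlMl // -mulrA.
apply: (coalition_not_strong_eq (a := a) (t := 0)) => //.
- by rewrite -lez_nat (le_trans ak kn).
- by rewrite lexx ler01.
- by case; rewrite /coalition_gain /misreport_gain /misreport_prob /=; lra.
- by exists false; rewrite /coalition_gain /misreport_gain /misreport_prob /=; lra.
Qed.

End Interim.

Unset Implicit Arguments. Set Strict Implicit.

Theorem theorem2 (R : realType) (ph phh phl : R) (PS : bool -> R -> R) :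
  0 < ph < 1 -> phl < phh -> 0 < phl -> phh < 1 ->
  strictly_proper PS ->
  exists n0 : nat, forall (n : nat) (Q : profile n -> R),
    (n0 <= n)%N ->
    is_prior Q -> symmetric_prior Q -> has_marginals Q ph phh phl ->
    k_strong_eq Q PS phh phl (kB n PS phh phl) (@truthful_profile R n) /\
    (forall k : int, kB n PS phh phl < k -> k <= n%:Z ->
       ~ k_strong_eq Q PS phh phl k (@truthful_profile R n)).
Proof.
move=> Hph phl_lt_phh phl_gt0 phh_lt1 PS_proper.
exists 2%N => n Q n_gt1 HQ _ HM; split.
  exact: truthful_kB_strong_eq HQ Hph HM n_gt1 phl_gt0 phl_lt_phh phh_lt1 PS_proper.
move=> k; rewrite /kB !gt_min => /orP[kBk | /orP[kBk | nk]] kn.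
- exact: (not_strong_eq_above_kBh HQ Hph HM n_gt1 phl_gt0 phl_lt_phh phh_lt1 PS_proper kBk kn).
- exact: (not_strong_eq_above_kBl HQ Hph HM n_gt1 phl_gt0 phl_lt_phh phh_lt1 PS_proper kBk kn).
- by have := lt_le_trans nk kn; rewrite ltxx.
Qed.
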